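(* Let $n\ge 2$. The completely isolated subsemigroups of $\mathcal{I}^{\ast}_n$ are exactly $\mathcal{I}^{\ast}_n$, $\mathcal{S}_n$ and $\mathcal{I}^{\ast}_n\setminus\mathcal{S}_n$.
   Context: Let $X=\{1,\dots,n\}$, $X'=\{1',\dots,n'\}$. $\mathcal{I}^{\ast}_n$ is the set of partitions of $X\cup X'$ all of whose blocks meet both $X$ and $X'$, with product: regard $\alpha$ as a partition of $X\cup X''$ and $\beta$ as a partition of $X''\cup X'$ ($X''$ a third copy of $X$), and let $\alpha\beta$ be the partition of $X\cup X'$ induced by the equivalence on $X\cup X''\cup X'$ generated by the blocks of both. $\mathcal{S}_n$ is its group of units: the elements all of whose blocks are $\{x,\pi(x)'\}$ for a permutation $\pi$ of $X$. A subsemigroup $T$ of a semigroup $S$ is completely isolated if for all $a,b\in S$, $ab\in T$ implies $a\in T$ or $b\in T$. *)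

From mathcomp Require Import all_boot all_fingroup.
Set Warnings "-notation-overridden".
Set Implicit Arguments. Unset Strict Implicit. Unset Printing Implicit Defensive.

(* X ∪ X' encoded as 'I_n + 'I_n : inl i = i ∈ X, inr i = i' ∈ X'. *)
Definition pt (n : nat) : finType := ('I_n + 'I_n)%type.

(* X ∪ X'' ∪ X' encoded as ('I_n + 'I_n) + 'I_n :
   inl (inl i) = i ∈ X, inl (inr i) = i'' ∈ X'', inr i = i' ∈ X'. *)
Definition pt3 (n : nat) : finType := (('I_n + 'I_n) + 'I_n)%type.

Definition is_dsim (n : nat) (P : {set {set pt n}}) : bool :=
  partition P [set: pt n] &&
  [forall B in P, [exists i : 'I_n, (inl i : pt n) \in B]
               && [exists j : 'I_n, (inr j : pt n) \in B]].

Definition Istar (n : nat) : {set {set {set pt n}}} := [set P | is_dsim P].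

(* alpha viewed on X ∪ X'', beta viewed on X'' ∪ X' *)
Definition embL (n : nat) (u : pt n) : pt3 n :=
  match u with inl i => inl (inl i) | inr i => inl (inr i) end.
Definition embR (n : nat) (u : pt n) : pt3 n :=
  match u with inl i => inl (inr i) | inr i => inr i end.
Definition embO (n : nat) (u : pt n) : pt3 n :=
  match u with inl i => inl (inl i) | inr i => inr i end.

Arguments embL {n}. Arguments embR {n}. Arguments embO {n}.

Definition prod_rel (n : nat) (a b : {set {set pt n}}) : rel (pt3 n) :=
  fun x y =>
    [exists B in a, (x \in embL @: B) && (y \in embL @: B)] ||
    [exists B in b, (x \in embR @: B) && (y \in embR @: B)].

(* the product: partition of X ∪ X' induced by the generated equivalence
   (reflexive-transitive closure of the symmetric relation prod_rel) *)
Definition dmul (n : nat) (a b : {set {set pt n}}) : {set {set pt n}} :=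
  [set [set v : pt n | connect (prod_rel a b) (embO u) (embO v)] | u : pt n].

Definition Sn (n : nat) : {set {set {set pt n}}} :=
  [set P | [exists s : {perm 'I_n},
     P == [set [set (inl x : pt n); inr (s x)] | x : 'I_n]]].

Definition subsemigroup (n : nat) (T : {set {set {set pt n}}}) : Prop :=
  T \subset Istar n /\ T != set0 /\
  (forall a b, a \in T -> b \in T -> dmul a b \in T).

Definition completely_isolated (n : nat) (T : {set {set {set pt n}}}) : Prop :=
  subsemigroup T /\
  (forall a b, a \in Istar n -> b \in Istar n ->
     dmul a b \in T -> a \in T \/ b \in T).

From mathcomp Require Import all_boot all_fingroup.
Set Implicit Arguments. Unset Strict Implicit. Unset Printing Implicit Defensive.

(* If T is completely isolated, then whenever a and b both lie in T or both lie
   outside T, so does ab.  Hence every unit has the status of the identity (the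
   units of s, s^2, s^3, ... share one status, and s ^+ #[s] = 1), multiplying
   by a unit preserves status since it can be undone, and so does conjugating.
   A non-unit a joins two distinct points of X, so for x with the status of a
   some conjugate a' of a makes x a' join two points of X that x separates,
   while keeping every block of x together; x a' again has the status of a.
   Iterating from x = a reaches the partition with a single block, so all
   non-units share its status, and T is a union of S_n and I*_n \ S_n.
   Conversely, ab in S_n forces a in S_n, which makes each of the three
   nonempty unions completely isolated. *)

Section SameBlock.
Variable T : finType.
Implicit Types (P Q : {set {set T}}) (x y : T).

Definition same_block P x y := pblock P x == pblock P y.

Lemma same_block_refl P : reflexive (same_block P).
Proof. by move=> x; apply: eqxx. Qed.

Lemma same_block_sym P : symmetric (same_block P).
Proof. by move=> x y; apply: eq_sym. Qed.

Lemma same_block_trans P : transitive (same_block P).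
Proof. by move=> y x z; rewrite /same_block => /eqP-> /eqP->. Qed.

Lemma same_blockE P x y :
  partition P setT -> same_block P x y = (y \in pblock P x).
Proof. by case/and3P=> /eqP coverP tiP _; rewrite /same_block eq_pblock ?coverP. Qed.

Lemma same_block_mem P B x y :
  partition P setT -> B \in P -> x \in B -> y \in B -> same_block P x y.
Proof. by case/and3P=> _ tiP _ PB xB yB; rewrite /same_block !(def_pblock tiP PB). Qed.

Lemma pblockT_mem P x : partition P setT -> pblock P x \in P.
Proof. by case/and3P=> /eqP coverP _ _; rewrite pblock_mem ?coverP. Qed.

Section EquivalencePartition.
Variable R : rel T.
Hypotheses (Rxx : reflexive R) (Rsym : symmetric R) (Rtr : transitive R).

Lemma equivalence_relT : {in setT & &, equivalence_rel R}.
Proof.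
move=> x y z _ _ _; split=> // Rxy.
by apply/idP/idP; [apply: Rtr; rewrite Rsym | apply: Rtr].
Qed.

Lemma equivalence_partitionT : partition (equivalence_partition R setT) setT.
Proof. exact/equivalence_partitionP/equivalence_relT. Qed.

Lemma same_block_equivalence_partition :
  same_block (equivalence_partition R setT) =2 R.
Proof.
move=> x y; rewrite same_blockE ?equivalence_partitionT //.
by rewrite pblock_equivalence_partition ?inE //; apply: equivalence_relT.
Qed.

End EquivalencePartition.

Lemma partitionT_eq P Q : partition P setT -> partition Q setT ->
  same_block P =2 same_block Q -> P = Q.
Proof.
move=> partP partQ PQ.
rewrite -(preim_partition_pblock partP) -(preim_partition_pblock partQ).
by apply: eq_imset => x; apply/setP => y; rewrite !inE -!/(same_block _ _ _) PQ.
Qed.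

End SameBlock.

Lemma eqb_of_iff (c x y : bool) : (x = c <-> y = c) -> x = y.
Proof.
by case: c x y => [] [] [] [xy yx] //; first [exact: yx erefl | exact: esym (xy erefl)].
Qed.

Lemma connect_kernel (T : finType) (rT : eqType) (e : rel T) (k : T -> rT)
    (r : T -> T) :
  symmetric e -> (forall x y, e x y -> k x = k y) ->
  (forall x, connect e x (r x)) ->
  (forall x y, k x = k y -> connect e (r x) (r y)) ->
  forall x y, connect e x y = (k x == k y).
Proof.
move=> esym ek xr kr x y; apply/idP/eqP => [/connectP[p] | kxy].
  by elim: p x => [|z p IHp] x /= => [_ -> | /andP[/ek-> /IHp]].
apply: connect_trans (xr x) (connect_trans (kr _ _ kxy) _).
by rewrite (sym_connect_sym esym) xr.
Qed.

Section Product.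
Variable n : nat.
Local Notation pt := (pt n).
Implicit Types (a b P : {set {set pt}}) (u v : pt).

Lemma IstarP P : reflect
  (partition P setT /\ forall u,
     (exists i, same_block P u (inl i)) /\ (exists j, same_block P u (inr j)))
  (P \in Istar n).
Proof.
rewrite inE /is_dsim.
apply: (iffP andP) => [[partP /forall_inP meetXX'] | [partP meetXX']].
  split=> // u.
  have /meetXX'/andP[/existsP[i iB] /existsP[j jB]] := pblockT_mem u partP.
  by split; [exists i | exists j]; rewrite same_blockE.
split=> //; apply/forall_inP => B PB; have [coverP tiP notP0] := and3P partP.
have /set0Pn[u uB] : B != set0 by apply: contraNneq notP0 => <-.
have [[i ui] [j uj]] := meetXX' u.
rewrite !same_blockE // (def_pblock tiP PB uB) in ui uj.
by apply/andP; split; apply/existsP; [exists i | exists j].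
Qed.

Lemma Istar_partition P : P \in Istar n -> partition P setT.
Proof. by case/IstarP. Qed.

Lemma prod_rel_sym a b : symmetric (prod_rel a b).
Proof.
move=> x y; rewrite /prod_rel.
by congr (_ || _); apply: eq_existsb => B; rewrite [X in _ && X]andbC.
Qed.

Definition dmul_rel a b : rel pt :=
  fun u v => connect (prod_rel a b) (embO u) (embO v).

Lemma dmul_rel_refl a b : reflexive (dmul_rel a b).
Proof. by move=> u; apply: connect0. Qed.

Lemma dmul_rel_sym a b : symmetric (dmul_rel a b).
Proof. by move=> u v; apply/sym_connect_sym/prod_rel_sym. Qed.

Lemma dmul_rel_trans a b : transitive (dmul_rel a b).
Proof. by move=> v u w; apply: connect_trans. Qed.

Lemma dmulE a b : dmul a b = equivalence_partition (dmul_rel a b) setT.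
Proof.
apply/setP => B; apply/imsetP/imsetP => -[u _ ->]; exists u => //;
  by apply/setP => v; rewrite !inE.
Qed.

Lemma dmul_partition a b : partition (dmul a b) setT.
Proof.
rewrite dmulE; apply: equivalence_partitionT;
  [apply: dmul_rel_refl | apply: dmul_rel_sym | apply: dmul_rel_trans].
Qed.

Lemma same_block_dmul a b : same_block (dmul a b) =2 dmul_rel a b.
Proof.
rewrite dmulE; apply: same_block_equivalence_partition;
  [apply: dmul_rel_refl | apply: dmul_rel_sym | apply: dmul_rel_trans].
Qed.

Lemma prod_relL a b u v :
  partition a setT -> same_block a u v -> prod_rel a b (embL u) (embL v).
Proof.
move=> parta auv; apply/orP; left; apply/exists_inP; exists (pblock a u).
  exact: pblockT_mem.
by rewrite !imset_f // -same_blockE ?same_block_refl.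
Qed.

Lemma prod_relR a b u v :
  partition b setT -> same_block b u v -> prod_rel a b (embR u) (embR v).
Proof.
move=> partb buv; apply/orP; right; apply/exists_inP; exists (pblock b u).
  exact: pblockT_mem.
by rewrite !imset_f // -same_blockE ?same_block_refl.
Qed.

Lemma prod_relP a b x y :
  partition a setT -> partition b setT -> prod_rel a b x y ->
  (exists u v, [/\ x = embL u, y = embL v & same_block a u v]) \/
  (exists u v, [/\ x = embR u, y = embR v & same_block b u v]).
Proof.
move=> parta partb /orP[] /exists_inP[B PB /andP[/imsetP[u uB ->] /imsetP[v vB ->]]].
  by left; exists u, v; split=> //; apply: same_block_mem PB uB vB.
by right; exists u, v; split=> //; apply: same_block_mem PB uB vB.
Qed.

Lemma dmul_Istar a b : a \in Istar n -> b \in Istar n -> dmul a b \in Istar n.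
Proof.
move=> /IstarP[parta meeta] /IstarP[partb meetb]; apply/IstarP.
split=> [|u]; first exact: dmul_partition.
have XtoX' i : exists j, dmul_rel a b (inl i) (inr j).
  have [_ [k aik]] := meeta (inl i); have [_ [j bkj]] := meetb (inl k).
  exists j; apply: (connect_trans (connect1 (prod_relL b parta aik))).
  exact: connect1 (prod_relR a partb bkj).
have X'toX j : exists i, dmul_rel a b (inr j) (inl i).
  have [[k bjk] _] := meetb (inr j); have [[i aki] _] := meeta (inr k).
  exists i; apply: (connect_trans (connect1 (prod_relR a partb bjk))).
  exact: connect1 (prod_relL b parta aki).
case: u => [i | j]; split.
- by exists i; apply: same_block_refl.
- by have [j ij] := XtoX' i; exists j; rewrite same_block_dmul.
- by have [i ji] := X'toX j; exists i; rewrite same_block_dmul.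
- by exists j; apply: same_block_refl.
Qed.

Lemma same_block_dmull a b i j : partition a setT ->
  same_block a (inl i) (inl j) -> same_block (dmul a b) (inl i) (inl j).
Proof.
by move=> parta aij; rewrite same_block_dmul; apply: connect1 (prod_relL b parta aij).
Qed.

End Product.

Section Units.
Local Open Scope group_scope.
Variable n : nat.
Local Notation pt := (pt n).
Implicit Types (s t : {perm 'I_n}) (P : {set {set pt}}) (u v : pt).

Definition perm_unit s : {set {set pt}} := [set [set inl x; inr (s x)] | x : 'I_n].

(* The point of X whose block in [perm_unit s] contains u. *)
Definition perm_key s u : 'I_n := match u with inl x => x | inr y => s^-1 y end.

Lemma perm_unitE s : perm_unit s = preim_partition (perm_key s) setT.
Proof.
have block_key x : [set inl x; inr (s x)] = [set v in setT | x == perm_key s v].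
  apply/setP => -[y | y]; rewrite !inE /=.
    by apply/orP/eqP => [[/eqP[->] | /eqP] // | ->]; left.
  by apply/eqP/eqP => [[->] | ->]; rewrite ?permK ?permKV.
apply/setP => B; apply/imsetP/imsetP => -[u _ ->].
  by exists (inl u); rewrite ?inE ?block_key.
by exists (perm_key s u); rewrite ?block_key.
Qed.

Lemma perm_unit_partition s : partition (perm_unit s) setT.
Proof. by rewrite perm_unitE; apply: preim_partitionP. Qed.

Lemma same_block_perm_unit s u v :
  same_block (perm_unit s) u v = (perm_key s u == perm_key s v).
Proof.
rewrite perm_unitE; apply: same_block_equivalence_partition => [w | w w' | w' w w''] /=.
- exact: eqxx.
- exact: eq_sym.
- by move=> /eqP->.
Qed.

Lemma perm_unit_Istar s : perm_unit s \in Istar n.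
Proof.
apply/IstarP; split=> [|u]; first exact: perm_unit_partition.
split; first by exists (perm_key s u); rewrite same_block_perm_unit.
by exists (s (perm_key s u)); rewrite same_block_perm_unit /= permK.
Qed.

Lemma SnP P : reflect (exists s, P = perm_unit s) (P \in Sn n).
Proof. by rewrite inE; apply: (iffP existsP) => -[s Ps]; exists s; apply/eqP. Qed.

Definition relabelL s u : pt := match u with inl x => inl (s x) | inr y => inr y end.
Definition relabelR t u : pt := match u with inl x => inl x | inr y => inr (t^-1 y) end.

Lemma same_block_perm_unit_dmul s P u v : partition P setT ->
  same_block (dmul (perm_unit s) P) u v =
  same_block P (relabelL s u) (relabelL s v).
Proof.
move=> partP; rewrite same_block_dmul.
(* h glues each point of X to its partner in X'' under [perm_unit s]. *)
pose h (x : pt3 n) : pt :=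
  match x with inl (inl x) => inl (s x) | inl (inr y) => inl y | inr z => inr z end.
have hL w : h (embL w) = inl (s (perm_key s w)) by case: w => w //=; rewrite permKV.
have hR w : h (embR w) = w by case: w.
rewrite /dmul_rel (@connect_kernel _ _ _ (pblock P \o h) (embR \o h)).
- by case: u; case: v.
- exact: prod_rel_sym.
- move=> x y /(prod_relP (perm_unit_partition s) partP) [] [u' [v' [-> -> uv]]] /=.
    by rewrite !hL; rewrite same_block_perm_unit in uv; rewrite (eqP uv).
  by rewrite !hR; apply/eqP.
- case=> [[x | y] | z]; try exact: connect0.
  apply: connect1 (@prod_relL n _ P (inl x) (inr (s x)) (perm_unit_partition s) _).
  by rewrite same_block_perm_unit /= permK.
- by move=> x y /eqP kxy; apply: connect1 (prod_relR _ partP kxy).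
Qed.

Lemma same_block_dmul_perm_unit t P u v : partition P setT ->
  same_block (dmul P (perm_unit t)) u v =
  same_block P (relabelR t u) (relabelR t v).
Proof.
move=> partP; rewrite same_block_dmul.
pose h (x : pt3 n) : pt :=
  match x with inl (inl x) => inl x | inl (inr y) => inr y | inr z => inr (t^-1 z) end.
have hL w : h (embL w) = w by case: w.
have hR w : h (embR w) = inr (perm_key t w) by case: w.
rewrite /dmul_rel (@connect_kernel _ _ _ (pblock P \o h) (embL \o h)).
- by case: u; case: v.
- exact: prod_rel_sym.
- move=> x y /(prod_relP partP (perm_unit_partition t)) [] [u' [v' [-> -> uv]]] /=.
    by rewrite !hL; apply/eqP.
  by rewrite !hR; rewrite same_block_perm_unit in uv; rewrite (eqP uv).
- case=> [[x | y] | z]; try exact: connect0.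
  apply: connect1 (@prod_relR n P _ (inr z) (inl (t^-1 z)) (perm_unit_partition t) _).
  by rewrite same_block_perm_unit.
- by move=> x y /eqP kxy; apply: connect1 (prod_relL _ partP kxy).
Qed.

Lemma perm_unitM s t : dmul (perm_unit s) (perm_unit t) = perm_unit (s * t).
Proof.
apply: partitionT_eq (dmul_partition _ _) (perm_unit_partition _) _ => u v.
rewrite same_block_perm_unit_dmul ?perm_unit_partition // !same_block_perm_unit.
have key_relabel w : perm_key t (relabelL s w) = s (perm_key (s * t) w).
  by case: w => w //=; rewrite invMg permM permKV.
by rewrite !key_relabel (inj_eq perm_inj).
Qed.

Lemma perm_unit_dmulK s P : partition P setT ->
  dmul (perm_unit s^-1) (dmul (perm_unit s) P) = P.
Proof.
move=> partP; apply: (partitionT_eq (dmul_partition _ _) partP) => u v.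
rewrite !same_block_perm_unit_dmul ?dmul_partition //.
have relabelK w : relabelL s (relabelL s^-1 w) = w by case: w => w //=; rewrite permKV.
by rewrite !relabelK.
Qed.

Lemma dmul_perm_unitK s P : partition P setT ->
  dmul (dmul P (perm_unit s)) (perm_unit s^-1) = P.
Proof.
move=> partP; apply: (partitionT_eq (dmul_partition _ _) partP) => u v.
rewrite !same_block_dmul_perm_unit ?dmul_partition //.
have relabelK w : relabelR s (relabelR s^-1 w) = w.
  by case: w => w //=; rewrite invgK permK.
by rewrite !relabelK.
Qed.

Definition perm_conj g P := dmul (dmul (perm_unit g) P) (perm_unit g^-1).

Lemma perm_conj_Istar g P : P \in Istar n -> perm_conj g P \in Istar n.
Proof. by move=> PI; rewrite !dmul_Istar ?perm_unit_Istar. Qed.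

Lemma same_block_perm_conj g P i j : partition P setT ->
  same_block (perm_conj g P) (inl i) (inl j) =
  same_block P (inl (g i)) (inl (g j)).
Proof.
move=> partP.
by rewrite same_block_dmul_perm_unit ?same_block_perm_unit_dmul ?dmul_partition.
Qed.

Lemma Sn_injP P : P \in Istar n ->
  reflect (forall i j, same_block P (inl i) (inl j) -> i = j) (P \in Sn n).
Proof.
move=> PI; apply: (iffP (SnP P)) => [[s ->] i j | Xinj].
  by rewrite same_block_perm_unit => /eqP.
have [partP meetX'] := IstarP P PI.
have /all_sig[f fP] : forall i, {j | same_block P (inl i) (inr j)}.
  by move=> i; apply: sigW; case: (meetX' (inl i)).
have finj : injective f.
  move=> i j fij; apply: Xinj; apply: same_block_trans (fP i) _.
  by rewrite same_block_sym fij.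
exists (perm finj); apply: (partitionT_eq partP (perm_unit_partition _)) => u v.
have u_key w : same_block P w (inl (perm_key (perm finj) w)).
  case: w => [x | y] /=; first exact: same_block_refl.
  rewrite same_block_sym; have := fP ((perm finj)^-1 y).
  by rewrite -(permE finj) permKV.
rewrite same_block_perm_unit; apply/idP/eqP => [Puv | keyuv].
  apply: Xinj; apply: same_block_trans (u_key v); apply: same_block_trans Puv.
  by rewrite same_block_sym.
by apply: same_block_trans (u_key u) _; rewrite keyuv same_block_sym.
Qed.

Lemma dmul_Snl a b :
  a \in Istar n -> b \in Istar n -> dmul a b \in Sn n -> a \in Sn n.
Proof.
move=> aI bI abS; apply/Sn_injP => // i j aij.
by apply/(Sn_injP (dmul_Istar aI bI) abS)/same_block_dmull/aij/Istar_partition.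
Qed.

Lemma notin_SnP a : a \in Istar n -> a \notin Sn n ->
  exists i j, i != j /\ same_block a (inl i) (inl j).
Proof.
move=> aI aNS.
have : [exists i, exists j, (i != j) && same_block a (inl i) (inl j)].
  apply: contraR aNS => noPair; apply/(Sn_injP aI) => i j aij.
  apply/eqP; apply: contraNT noPair => ij.
  by apply/existsP; exists i; apply/existsP; exists j; rewrite ij.
by case/existsP => i /existsP[j /andP[ij aij]]; exists i, j.
Qed.

Lemma dmul_Sn a b : a \in Sn n -> b \in Sn n -> dmul a b \in Sn n.
Proof.
by move=> /SnP[s ->] /SnP[t ->]; rewrite perm_unitM; apply/SnP; exists (s * t).
Qed.

Lemma Sn_sub_Istar : Sn n \subset Istar n.
Proof. by apply/subsetP => P /SnP[s ->]; apply: perm_unit_Istar. Qed.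

End Units.

Lemma exists_perm2 (T : finType) (x y x' y' : T) : x != y -> x' != y' ->
  exists g : {perm T}, g x = x' /\ g y = y'.
Proof.
move=> xy x'y'; set z := tperm x x' y.
have zx' : z != x'.
  by rewrite -(inj_eq (@perm_inj _ (tperm x x'))) /z tpermK tpermR eq_sym.
exists (tperm x x' * tperm z y')%g; rewrite !permM tpermL tpermL.
by rewrite tpermD // eq_sym.
Qed.

Section Nonunits.
Variable n : nat.
Local Notation pt := (pt n).
Implicit Types (a x P : {set {set pt}}).

Definition single_block : {set {set pt}} := [set setT].

Lemma same_block_single_block u v : same_block single_block u v.
Proof. by rewrite /same_block !(def_pblock (trivIset1 _) (set11 _)) ?inE. Qed.

Lemma single_block_Istar : 0 < n -> single_block \in Istar n.
Proof.
move=> n_gt0; apply/IstarP; split=> [|u].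
  rewrite /partition /cover big_set1 eqxx trivIset1 /= inE eq_sym.
  by apply/set0Pn; exists (inl (Ordinal n_gt0)).
by split; exists (Ordinal n_gt0); apply: same_block_single_block.
Qed.

Lemma single_block_notin_Sn : 1 < n -> single_block \notin Sn n.
Proof.
move=> n_gt1; apply/negP => /SnP[s s1].
have := same_block_single_block (inl (Ordinal (ltnW n_gt1))) (inl (Ordinal n_gt1)).
by rewrite s1 same_block_perm_unit.
Qed.

Definition split_pairs P :=
  [set p : 'I_n * 'I_n | ~~ same_block P (inl p.1) (inl p.2)].

Lemma split_pairs_eq0 P : 0 < n -> P \in Istar n ->
  split_pairs P = set0 -> P = single_block.
Proof.
move=> n_gt0 /IstarP[partP meetX] noSplit.
have joinX i j : same_block P (inl i) (inl j).
  by apply/negbNE/negP => Pij; have := in_set0 (i, j); rewrite -noSplit inE Pij.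
apply: (partitionT_eq partP (Istar_partition (single_block_Istar n_gt0))) => u v.
rewrite same_block_single_block.
have [[i ui] _] := meetX u; have [[j vj] _] := meetX v.
by apply: same_block_trans ui (same_block_trans (joinX i j) _); rewrite same_block_sym.
Qed.

Lemma split_pairs_perm_conj x a :
  x \in Istar n -> a \in Istar n -> a \notin Sn n -> split_pairs x != set0 ->
  exists g, split_pairs (dmul x (perm_conj g a)) \proper split_pairs x.
Proof.
move=> xI aI aNS /set0Pn[[i j]]; rewrite inE /= => xij.
have partx := Istar_partition xI; have [_ meetX] := IstarP x xI.
have [[_ [p ip]] [_ [q jq]]] := (meetX (inl i), meetX (inl j)).
have pq : p != q.
  apply: contraNneq xij => pq.
  by apply: same_block_trans ip _; rewrite pq same_block_sym.
have [k [l [kl akl]]] := notin_SnP aI aNS.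
have [g [gpk gql]] := exists_perm2 pq kl.
exists g; apply/properP; split.
  by apply/subsetP => -[i' j']; rewrite !inE; apply: contra; apply: same_block_dmull.
exists (i, j); rewrite !inE //= negbK same_block_dmul.
have conj_pq : same_block (perm_conj g a) (inl p) (inl q).
  by rewrite same_block_perm_conj ?gpk ?gql // Istar_partition.
apply: connect_trans (connect1 (prod_relL _ partx ip)) _.
apply: connect_trans (connect1 (prod_relR _ (dmul_partition _ _) conj_pq)) _.
by rewrite same_block_sym in jq; apply: connect1 (prod_relL _ partx jq).
Qed.

End Nonunits.

Section CompletelyIsolated.
Local Open Scope group_scope.
Variables (n : nat) (T : {set {set {set pt n}}}).
Hypothesis isoT : completely_isolated T.
Implicit Types (a b P : {set {set pt n}}).

Lemma dmul_mem_same a b c : a \in Istar n -> b \in Istar n ->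
  (a \in T) = c -> (b \in T) = c -> (dmul a b \in T) = c.
Proof.
have [[_ [_ mulT]] isolT] := isoT; move=> aI bI <- ab.
case aT: (a \in T); first by apply: mulT; rewrite // ab.
by apply/negbTE/negP => /(isolT _ _ aI bI)[]; rewrite ?ab aT.
Qed.

Lemma perm_unit_mem s : (perm_unit s \in T) = (perm_unit 1 \in T).
Proof.
have expS k : (perm_unit (s ^+ k.+1) \in T) = (perm_unit s \in T).
  elim: k => [|k IHk]; first by rewrite expg1.
  by rewrite expgSr -perm_unitM; apply: dmul_mem_same; rewrite ?perm_unit_Istar.
by rewrite -(expS #[s].-1) prednK ?order_gt0 // expg_order.
Qed.

Lemma perm_unit_dmul_mem s P : P \in Istar n ->
  (dmul (perm_unit s) P \in T) = (P \in T).
Proof.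
move=> PI; have sPI := dmul_Istar (perm_unit_Istar s) PI.
apply: (@eqb_of_iff (perm_unit 1 \in T)); split=> [sPT | PT].
  rewrite -(perm_unit_dmulK s (Istar_partition PI)).
  by apply: dmul_mem_same; rewrite ?perm_unit_Istar ?perm_unit_mem.
by apply: dmul_mem_same; rewrite ?perm_unit_Istar ?perm_unit_mem.
Qed.

Lemma dmul_perm_unit_mem s P : P \in Istar n ->
  (dmul P (perm_unit s) \in T) = (P \in T).
Proof.
move=> PI; have Ps_I := dmul_Istar PI (perm_unit_Istar s).
apply: (@eqb_of_iff (perm_unit 1 \in T)); split=> [PsT | PT].
  rewrite -(dmul_perm_unitK s (Istar_partition PI)).
  by apply: dmul_mem_same; rewrite ?perm_unit_Istar ?perm_unit_mem.
by apply: dmul_mem_same; rewrite ?perm_unit_Istar ?perm_unit_mem.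
Qed.

Lemma perm_conj_mem g P : P \in Istar n -> (perm_conj g P \in T) = (P \in T).
Proof.
move=> PI.
by rewrite dmul_perm_unit_mem ?perm_unit_dmul_mem ?dmul_Istar ?perm_unit_Istar.
Qed.

Lemma nonunit_mem a : 0 < n -> a \in Istar n -> a \notin Sn n ->
  (a \in T) = (single_block n \in T).
Proof.
move=> n_gt0 aI aNS; apply: esym.
suff coarsen x : x \in Istar n -> (x \in T) = (a \in T) ->
    (single_block n \in T) = (a \in T).
  exact: coarsen aI erefl.
have [m] := ubnP #|split_pairs x|; elim: m x => // m IHm x splitx xI xa.
have [/(split_pairs_eq0 n_gt0 xI) <- // | xsplit] := eqVneq (split_pairs x) set0.
have [g /proper_card finer] := split_pairs_perm_conj xI aI aNS xsplit.
apply: (IHm (dmul x (perm_conj g a))); first exact: leq_trans finer _.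
  by rewrite dmul_Istar ?perm_conj_Istar.
by apply: dmul_mem_same; rewrite ?perm_conj_mem ?dmul_Istar ?perm_unit_Istar.
Qed.

Lemma completely_isolatedE : 0 < n ->
  T = [set P in Istar n |
        if P \in Sn n then perm_unit 1 \in T else single_block n \in T].
Proof.
have [[TI _] _] := isoT; move=> n_gt0; apply/setP => P; rewrite inE.
have [PI | PNI] := boolP (P \in Istar n).
  by case: ifPn => [/SnP[s ->] | PNS] /=; [rewrite perm_unit_mem | rewrite nonunit_mem].
by apply: contraNF PNI; apply: (subsetP TI).
Qed.

End CompletelyIsolated.

Lemma completely_isolated_Istar n : 0 < n -> completely_isolated (Istar n).
Proof.
move=> n_gt0; split=> [|a b aI _ _]; last by left.
split=> //; split=> [|a b]; last exact: dmul_Istar.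
by apply/set0Pn; exists (single_block n); apply: single_block_Istar.
Qed.

Lemma completely_isolated_Sn n : completely_isolated (Sn n).
Proof.
split=> [|a b aI bI abS]; last by left; apply: dmul_Snl abS.
split; first exact: Sn_sub_Istar.
split=> [|a b]; last exact: dmul_Sn.
by apply/set0Pn; exists (perm_unit 1%g); apply/SnP; exists 1%g.
Qed.

Lemma completely_isolated_nonunits n :
  1 < n -> completely_isolated (Istar n :\: Sn n).
Proof.
move=> n_gt1; split=> [|a b aI bI]; last first.
  rewrite !in_setD aI bI !andbT => /andP[abNS _].
  have [aS | aNS] := boolP (a \in Sn n); last by left.
  by right; exact: contraNN (dmul_Sn aS) abNS.
split; first exact: subsetDl.
split=> [|a b]; rewrite ?in_setD.
  apply/set0Pn; exists (single_block n).
  by rewrite in_setD single_block_notin_Sn ?single_block_Istar // ltnW.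
move=> /andP[aNS aI] /andP[_ bI]; rewrite dmul_Istar // andbT.
exact: contraNN (dmul_Snl aI bI) aNS.
Qed.

Theorem mainTheorem8 (n : nat) (hn : 2 <= n) (T : {set {set {set pt n}}}) :
  completely_isolated T <->
  (T = Istar n \/ T = Sn n \/ T = Istar n :\: Sn n).
Proof.
split=> [isoT | [-> | [-> | ->]]]; last first.
- exact: completely_isolated_nonunits.
- exact: completely_isolated_Sn.
- exact/completely_isolated_Istar/ltnW.
have [[_ [T0 _]] _] := isoT; move: T0.
rewrite (completely_isolatedE isoT (ltnW hn)).
case: (perm_unit 1 \in T); case: (single_block n \in T) => T0.
- by left; apply/setP => P; rewrite inE if_same andbT.
- right; left; apply/setP => P; rewrite inE.
  by case: ifP => [/(subsetP (Sn_sub_Istar n)) -> | _]; rewrite ?andbF.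
- by right; right; apply/setP => P; rewrite !inE; case: ifP; rewrite ?andbF ?andbT.
- by case/set0Pn: T0 => P; rewrite inE if_same andbF.
Qed.
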